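(* Let $p$ be a prior probability density on $\mathcal{X}$, $L:\mathcal{X}\to[0,\infty)$ a likelihood, $Z(u) = \int_{\{x: L(x)>u\}} p(x)\,dx$, $w:[0,\infty)\to[0,\infty)$ a weight function and $W(u) = \int_0^u w(s)\,ds$. Consider the weighted slice sampler Markov chain $(X_n, U_n)$: given $X_n$, draw $U_{n+1}$ from the density $w(u)\,\mathbb{I}\{0\le u\le L(X_n)\}/W(L(X_n))$; then draw $X_{n+1}$ from the prior $p$ restricted to $\{x: L(x) > U_{n+1}\}$, i.e. with density $p(x)\,\mathbb{I}\{L(x) > U_{n+1}\}/Z(U_{n+1})$. Then for likelihood ordinates $y, z$ (with $W(y)>0$), $$\mathbb{P}\{L(X_{n+1}) \le z \mid L(X_n) = y\} = \int_0^{y\wedge z} \left\{1 - \frac{Z(z)}{Z(u)}\right\} \frac{w(u)}{W(y)}\, du.$$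
   Context: $y\wedge z = \min\{y,z\}$. This chain alternates between the conditionals of the weighted joint distribution $\pi_w(x,u) \propto w(u)\,\mathbb{I}\{0<u<L(x)\}\,p(x)$. *)

From HB Require Import structures.
From mathcomp Require Import all_boot all_order all_algebra.
From mathcomp Require Import all_classical all_reals all_analysis.
Set Implicit Arguments. Unset Strict Implicit. Unset Printing Implicit Defensive.
Import Order.TTheory GRing.Theory Num.Theory.
Local Open Scope classical_set_scope.
Local Open Scope ring_scope.
Local Open Scope ereal_scope.

Section WeightedSlice.
Context {d : measure_display} {T : measurableType d} {R : realType}.
(* nu : base measure "dx" on the state space; p : prior density w.r.t. nu;
   L : likelihood; w : weight function. *)
Variables (nu : {measure set T -> \bar R}) (p : T -> R) (L : T -> R) (w : R -> R).

Definition Zmass (u : R) : \bar R :=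
  \int[nu]_(x in [set x | (u < L x)%R]) (p x)%:E.

Definition Wcum (u : R) : \bar R :=
  \int[lebesgue_measure]_(s in `[0%R, u]) (w s)%:E.

Definition slice_density (x : T) (u : R) : \bar R :=
  (w u)%:E * (Wcum (L x))^-1.

Definition restricted_prior (u : R) (A : set T) : \bar R :=
  (\int[nu]_(x' in A `&` [set x' | (u < L x')%R]) (p x')%:E) * (Zmass u)^-1.

Definition wss_kernel (x : T) (A : set T) : \bar R :=
  \int[lebesgue_measure]_(u in `[0%R, L x]) (slice_density x u * restricted_prior u A).

End WeightedSlice.

From HB Require Import structures.
From mathcomp Require Import all_boot all_order all_algebra.
From mathcomp Require Import all_classical all_reals all_analysis.
From mathcomp Require Import measurable_realfun.
Set Implicit Arguments. Unset Strict Implicit. Unset Printing Implicit Defensive.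
Import Order.TTheory GRing.Theory Num.Theory.
Local Open Scope classical_set_scope.
Local Open Scope ring_scope.
Local Open Scope ereal_scope.

(** Given [U = u], the new ordinate falls in [(-oo, z]] with probability
    [Z{u < L <= z} / Z(u)]; for [u < z] the numerator is [Z(u) - Z(z)] and for
    [u >= z] it vanishes.  Averaging over [u] with density [w(u) / W(y)] on
    [[0, y]] gives the formula; the endpoint [u = y], where [Z(y)] may be [0],
    is a Lebesgue-null set. *)

Lemma measurable_inv (R : realType) : measurable_fun [set: R] (@GRing.inv R).
Proof.
have -> : [set: R] = [set x | x != 0%R] `|` [set 0%R].
  apply/seteqP; split => t //= _; case: (eqVneq t 0%R) => ?; [right|left] => //.
apply/measurable_funU => //.
- apply: open_measurable; exact: open_neq.
split; last exact: measurable_fun_set1.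
apply: open_continuous_measurable_fun; first exact: open_neq.
by move=> t /set_mem /= t0; apply: inv_continuous.
Qed.

Section level_sets.
Context d (T : measurableType d) (R : realType) (f : T -> R).
Hypothesis f_meas : measurable_fun setT f.

Lemma measurable_lt_level u : measurable [set x | (u < f x)%R].
Proof.
have := f_meas measurableT (@measurable_itv _ `]u, +oo[).
by rewrite setTI; congr measurable; apply/seteqP; split => t /=;
  rewrite in_itv /= andbT.
Qed.

Lemma measurable_le_level u : measurable [set x | (f x <= u)%R].
Proof.
have := f_meas measurableT (@measurable_itv _ `]-oo, u]).
by rewrite setTI; congr measurable; apply/seteqP; split => t /=;
  rewrite in_itv.
Qed.

End level_sets.

Section lebesgue_itv.
Context (R : realType).
Local Notation mu := (@lebesgue_measure R).

Lemma integral_itv_bndc_bndo_EFin (a b : R) (g : R -> \bar R) (h : R -> R) :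
  measurable_fun setT h -> {in `[a, b[, forall u, g u = (h u)%:E} ->
  \int[mu]_(u in `[a, b]) g u = \int[mu]_(u in `[a, b[) (h u)%:E.
Proof.
move=> h_meas gh; rewrite -integral_itv_bndo_bndc; last first.
  apply: (eq_measurable_fun (EFin \o h)) => [u /[!inE] /gh //|].
  exact: measurable_funS (measurableT_comp _ h_meas).
by apply: eq_integral => u /[!inE] /gh.
Qed.

Lemma integral_itv_bndo_min (a b c : R) (f : R -> \bar R) :
  (forall u, (c <= u)%R -> f u = 0) ->
  \int[mu]_(u in `[a, b[) f u = \int[mu]_(u in `[a, Order.min b c[) f u.
Proof.
move=> f0; rewrite [LHS]integral_mkcond [RHS]integral_mkcond.
apply: eq_integral => u _; rewrite !patchE !mem_setE /= !in_itv /= lt_min.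
by case: (ltP u c) => [|/f0 ->]; rewrite ?andbT ?andbF ?if_same.
Qed.

End lebesgue_itv.

Section prior_mass.
Context d (T : measurableType d) (R : realType).
Variables (nu : {measure set T -> \bar R}) (p : T -> R).
Hypotheses (p_meas : measurable_fun setT p) (p_ge0 : forall x, (0 <= p x)%R)
  (p_prob : \int[nu]_x (p x)%:E = 1).

Definition prior_mass (A : set T) : \bar R := \int[nu]_(x in A) (p x)%:E.

Let pE_meas (A : set T) : measurable_fun A (fun x => (p x)%:E).
Proof. exact: measurable_funS (measurableT_comp _ p_meas). Qed.

Lemma prior_mass_ge0 A : 0 <= prior_mass A.
Proof. by apply: integral_ge0 => x _; rewrite lee_fin. Qed.

Lemma le_prior_mass A B : measurable A -> measurable B -> A `<=` B ->
  prior_mass A <= prior_mass B.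
Proof.
by move=> mA mB; apply: ge0_subset_integral => // x _; rewrite lee_fin.
Qed.

Lemma prior_mass_le1 A : measurable A -> prior_mass A <= 1.
Proof.
by move=> mA; rewrite -p_prob; apply: (le_prior_mass mA measurableT).
Qed.

Lemma prior_mass_fin_num A : measurable A -> prior_mass A \is a fin_num.
Proof.
move=> mA; rewrite ge0_fin_numE ?prior_mass_ge0//.
by rewrite (le_lt_trans (prior_mass_le1 mA)) ?ltry.
Qed.

Lemma prior_massU A B : measurable A -> measurable B -> [disjoint A & B] ->
  prior_mass (A `|` B) = prior_mass A + prior_mass B.
Proof.
by move=> mA mB AB; apply: ge0_integral_setU => // x _; rewrite lee_fin.
Qed.

Lemma measurable_fine_prior_mass (A : R -> set T) :
  (forall u, measurable (A u)) -> (forall u v, (u <= v)%R -> A v `<=` A u) ->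
  measurable_fun setT (fun u => fine (prior_mass (A u))).
Proof.
move=> mA A_decr; apply: nonincreasing_measurable => // u v uv.
apply: fine_le; rewrite ?prior_mass_fin_num//.
exact: le_prior_mass (A_decr _ _ uv).
Qed.

End prior_mass.

Section weighted_slice_sampler.
Context d (T : measurableType d) (R : realType).
Variables (nu : {measure set T -> \bar R}) (p : T -> R) (L : T -> R) (w : R -> R).
Hypotheses (p_meas : measurable_fun setT p) (p_ge0 : forall x, (0 <= p x)%R)
  (p_prob : \int[nu]_x (p x)%:E = 1)
  (L_meas : measurable_fun setT L) (w_meas : measurable_fun setT w).

Definition level_slab (u z : R) : set T :=
  [set x | (L x <= z)%R] `&` [set x | (u < L x)%R].

Lemma measurable_level_slab u z : measurable (level_slab u z).
Proof.
by apply: measurableI; [exact: measurable_le_level|exact: measurable_lt_level].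
Qed.

Lemma level_slab_eq0 u z : (z <= u)%R -> level_slab u z = set0.
Proof.
move=> zu; apply/seteqP; split => // t [/= tz ut].
by have := le_lt_trans (le_trans tz zu) ut; rewrite ltxx.
Qed.

Lemma Zmass_fin_num u : Zmass nu p L u \is a fin_num.
Proof. exact: prior_mass_fin_num (measurable_lt_level _ _). Qed.

Lemma Zmass_level_slab u z : (u < z)%R ->
  Zmass nu p L u = prior_mass nu p (level_slab u z) + Zmass nu p L z.
Proof.
move=> uz; rewrite -prior_massU //; last 3 first.
- exact: measurable_level_slab.
- exact: measurable_lt_level.
- by apply/disj_setPS => t [[/= tz _]]; rewrite /= ltNge tz.
congr prior_mass; apply/seteqP; split => t /=.
  by move=> ut; case: (leP (L t) z) => ?; [left|right].
by case=> [[]|/(lt_trans uz)].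
Qed.

Variables (y z : R).
Hypotheses (W_gt0 : 0 < Wcum w y) (W_lty : Wcum w y < +oo)
  (Z_gt0 : forall u, (0 <= u)%R -> (u < y)%R -> 0 < Zmass nu p L u).

Let Zr u := fine (Zmass nu p L u).
Let Sr u := fine (prior_mass nu p (level_slab u z)).
Let Wr := fine (Wcum w y).

(* Real-valued form of both integrands on [[0, y[], where they are finite. *)
Let h u := (w u / Wr * (Sr u / Zr u))%R.

Let ZrE u : Zmass nu p L u = (Zr u)%:E.
Proof. by rewrite fineK ?Zmass_fin_num. Qed.

Let SrE u : prior_mass nu p (level_slab u z) = (Sr u)%:E.
Proof.
by rewrite fineK // prior_mass_fin_num //; exact: measurable_level_slab.
Qed.

Let WrE : Wcum w y = Wr%:E.
Proof. by rewrite fineK // ge0_fin_numE ?ltW. Qed.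

Let Wr_gt0 : (0 < Wr)%R.
Proof. by rewrite -lte_fin -WrE. Qed.

Let Zr_gt0 u : (0 <= u)%R -> (u < y)%R -> (0 < Zr u)%R.
Proof. by move=> u0 uy; rewrite -lte_fin -ZrE Z_gt0. Qed.

Let measurable_h : measurable_fun setT h.
Proof.
have mS : measurable_fun setT Sr.
  apply: measurable_fine_prior_mass => // [u|u v uv t [/= tz]].
    exact: measurable_level_slab.
  by move=> /(le_lt_trans uv).
have mZ : measurable_fun setT Zr.
  apply: measurable_fine_prior_mass => // [u|u v uv t /= /(le_lt_trans uv)//].
  exact: measurable_lt_level.
apply: measurable_funM.
  by apply: measurable_funM => //; exact: measurable_cst.
apply: measurable_funM => //.
exact: (measurableT_comp (@measurable_inv R) mZ).
Qed.

Let kernel_integrandE u : (0 <= u)%R -> (u < y)%R ->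
  (w u)%:E * (Wcum w y)^-1 *
    (prior_mass nu p (level_slab u z) * (Zmass nu p L u)^-1) = (h u)%:E.
Proof.
move=> u0 uy; rewrite SrE ZrE WrE !inver (gt_eqF Wr_gt0).
by rewrite (gt_eqF (Zr_gt0 u0 uy)) -!EFinM.
Qed.

Let formula_integrandE u : (0 <= u)%R -> (u < y)%R -> (u < z)%R ->
  (1 - Zmass nu p L z * (Zmass nu p L u)^-1) * ((w u)%:E * (Wcum w y)^-1) =
  (h u)%:E.
Proof.
move=> u0 uy uz; have Zu_neq0 := gt_eqF (Zr_gt0 u0 uy).
rewrite !ZrE WrE !inver (gt_eqF Wr_gt0) Zu_neq0 -!EFinM /h; congr EFin.
have -> : Sr u = (Zr u - Zr z)%R.
  apply: EFin_inj; rewrite EFinB -SrE -!ZrE (Zmass_level_slab uz).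
  by rewrite addeK ?Zmass_fin_num.
by rewrite [RHS]mulrC; congr (_ * _)%R; rewrite mulrBl divff ?Zu_neq0.
Qed.

Let h_eq0 u : (z <= u)%R -> h u = 0%R.
Proof.
move=> zu; rewrite /h /Sr level_slab_eq0 // /prior_mass integral_set0.
by rewrite mul0r mulr0.
Qed.

Lemma wss_kernel_level_le x : L x = y ->
  wss_kernel nu p L w x [set x' | (L x' <= z)%R] =
  \int[lebesgue_measure]_(u in `[0%R, Order.min y z])
     ((1 - Zmass nu p L z * (Zmass nu p L u)^-1) * ((w u)%:E * (Wcum w y)^-1)).
Proof.
move=> Lxy; rewrite /wss_kernel /slice_density /restricted_prior Lxy.
rewrite (integral_itv_bndc_bndo_EFin measurable_h); last first.
  by move=> u; rewrite in_itv /= => /andP[u0 uy]; exact: kernel_integrandE.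
rewrite [RHS](integral_itv_bndc_bndo_EFin measurable_h); last first.
  move=> u; rewrite in_itv /= lt_min => /andP[u0 /andP[uy uz]].
  exact: formula_integrandE.
by apply: integral_itv_bndo_min => u /h_eq0 ->.
Qed.

End weighted_slice_sampler.

Theorem lemma4 (d : measure_display) (T : measurableType d) (R : realType)
  (nu : {measure set T -> \bar R}) (p : T -> R) (L : T -> R) (w : R -> R)
  (p_meas : measurable_fun setT p) (p_ge0 : forall x, (0 <= p x)%R)
  (p_prob : \int[nu]_x (p x)%:E = 1)
  (L_meas : measurable_fun setT L) (L_ge0 : forall x, (0 <= L x)%R)
  (w_meas : measurable_fun setT w) (w_ge0 : forall s, (0 <= w s)%R)
  (x : T) (y z : R) (Lxy : L x = y)
  (Wy_pos : 0 < Wcum w y) (Wy_fin : Wcum w y < +oo)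
  (Z_pos : forall u : R, (0 <= u)%R -> (u < y)%R -> 0 < Zmass nu p L u) :
  wss_kernel nu p L w x [set x' | (L x' <= z)%R] =
  \int[lebesgue_measure]_(u in `[0%R, Order.min y z])
     ((1 - Zmass nu p L z * (Zmass nu p L u)^-1) * ((w u)%:E * (Wcum w y)^-1)).
Proof. exact: wss_kernel_level_le. Qed.
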